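(* Let $1\le r\le n$, let $p=(p_1,\dots,p_n)$ be a size vector, and let $A,B\subseteq S_p$ form a maximal pair of $r$-cross-intersecting families. If $i\in[n]$ is a relevant coordinate for $A$ or for $B$, then there exists $l\in[p_i]$ such that $$|\{x\in A: x_i\ne l\}|\le |A|/p_i\quad\text{and}\quad |\{y\in B: y_i\ne l\}|\le |B|/p_i.$$
   Context: $[m]=\{1,\dots,m\}$. A size vector is a sequence of integers $p=(p_1,\dots,p_n)$ with $p_i\ge 2$ for all $i$; $S_p=[p_1]\times\cdots\times[p_n]$. Two vectors $x,y\in S_p$ are $r$-intersecting if $|\{i: x_i=y_i\}|\ge r$; families $A,B\subseteq S_p$ are $r$-cross-intersecting if every $x\in A$, $y\in B$ are $r$-intersecting. A pair $(A,B)$ of $r$-cross-intersecting families in $S_p$ is maximal if it maximizes $|A|\cdot|B|$ among all $r$-cross-intersecting pairs in $S_p$. A coordinate $i$ is irrelevant for $A\subseteq S_p$ if whenever two elements of $S_p$ differ only in coordinate $i$ and one lies in $A$, so does the other; otherwise $i$ is relevant for $A$. *)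

From mathcomp Require Import all_boot.
Set Implicit Arguments. Unset Strict Implicit. Unset Printing Implicit Defensive.

(* Size vector p : 'I_n -> nat (with p i >= 2 assumed in theorems);
   coordinate i ranges over [p_i], represented 0-based as 'I_(p i). *)
Definition Sp (n : nat) (p : 'I_n -> nat) : finType :=
  {dffun forall i : 'I_n, 'I_(p i)}.

Definition agree n (p : 'I_n -> nat) (x y : Sp p) : nat :=
  #|[set i : 'I_n | x i == y i]|.

Definition r_intersecting n (p : 'I_n -> nat) (r : nat) (x y : Sp p) : bool :=
  r <= agree x y.

Definition cross_int n (p : 'I_n -> nat) (r : nat) (A B : {set Sp p}) : Prop :=
  forall x y, x \in A -> y \in B -> r_intersecting r x y.

Definition maximal_pair n (p : 'I_n -> nat) (r : nat) (A B : {set Sp p}) : Prop :=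
  cross_int r A B /\
  forall A' B' : {set Sp p}, cross_int r A' B' -> #|A'| * #|B'| <= #|A| * #|B|.

Definition differ_only_at n (p : 'I_n -> nat) (i : 'I_n) (x y : Sp p) : bool :=
  [forall j : 'I_n, (j != i) ==> (x j == y j)].

Definition irrelevant n (p : 'I_n -> nat) (i : 'I_n) (A : {set Sp p}) : Prop :=
  forall x y : Sp p, differ_only_at i x y -> x \in A -> y \in A.

Definition relevant n (p : 'I_n -> nat) (i : 'I_n) (A : {set Sp p}) : Prop :=
  ~ irrelevant i A.

From mathcomp Require Import all_boot zify.
Set Implicit Arguments. Unset Strict Implicit. Unset Printing Implicit Defensive.

(* Write a_l, b_l for the sizes of the fibres of A, B over x_i = l, and
   q = p_i.  Resetting coordinate i to l on A and to m != l on B costs at most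
   one agreement, so the two cylinders over these fibres are again
   r-cross-intersecting, and maximality gives q^2 a_l b_m <= |A| |B| for
   l != m.  Summing these inequalities shows that either some value l carries
   all but a 1/q share of both A and B, or all fibres of A and of B have equal
   size and q > 2.  In the latter case a relevant coordinate would let us
   enlarge one cylinder pair beyond |A| |B|. *)

Section CoordinateUpdate.
Variables (n : nat) (p : 'I_n -> nat) (i : 'I_n).

Definition set_coord (x : Sp p) (c : 'I_(p i)) : Sp p :=
  [ffun j => dfwith (fun k => x k) c j].

Lemma set_coord_eq x c : set_coord x c i = c.
Proof. by rewrite ffunE dfwith_in. Qed.

Lemma set_coord_neq x c j : i != j -> set_coord x c j = x j.
Proof. by move=> neq_ij; rewrite ffunE dfwith_out. Qed.

Lemma set_coord_set_coord x c d : set_coord (set_coord x c) d = set_coord x d.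
Proof.
apply/ffunP=> j; have [<-|neq_ij] := eqVneq i j; first by rewrite !set_coord_eq.
by rewrite !set_coord_neq.
Qed.

Lemma set_coord_id x : set_coord x (x i) = x.
Proof.
apply/ffunP=> j; have [<-|neq_ij] := eqVneq i j; first by rewrite set_coord_eq.
by rewrite set_coord_neq.
Qed.

Lemma agree_set_coord x y c d :
  c != d -> agree (set_coord x c) (set_coord y d) <= agree x y.
Proof.
move=> neq_cd; apply/subset_leq_card/subsetP=> j; rewrite !inE.
have [<-|neq_ij] := eqVneq i j; first by rewrite !set_coord_eq (negbTE neq_cd).
by rewrite !set_coord_neq.
Qed.

Lemma differ_only_at_set_coord x y c :
  differ_only_at i x y -> set_coord x c = set_coord y c.
Proof.
move=> /forallP eq_off_i; apply/ffunP=> j.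
have [<-|neq_ij] := eqVneq i j; first by rewrite !set_coord_eq.
by rewrite !set_coord_neq //; apply/eqP; have := eq_off_i j; rewrite eq_sym neq_ij.
Qed.

Definition fiber (A : {set Sp p}) (c : 'I_(p i)) := [set x in A | x i == c].

Definition cylinder (A : {set Sp p}) (c : 'I_(p i)) := [set z | set_coord z c \in A].

Lemma card_cylinder A c : #|cylinder A c| = p i * #|fiber A c|.
Proof.
have split_inj : injective (fun z : Sp p => (z i, set_coord z c)).
  move=> z w [eq_i eq_rest].
  by rewrite -(set_coord_id z) -(set_coord_set_coord z c) eq_rest
             set_coord_set_coord eq_i set_coord_id.
rewrite -(card_imset _ split_inj).
transitivity #|setX [set: 'I_(p i)] (fiber A c)|; last by rewrite cardsX cardsT card_ord.
apply: eq_card => -[k x]; rewrite !inE /=; apply/imsetP/andP.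
  by case=> z; rewrite inE => zA [_ ->]; rewrite set_coord_eq.
case=> xA /eqP <-; exists (set_coord x k); last first.
  by rewrite set_coord_eq set_coord_set_coord set_coord_id.
by rewrite inE set_coord_set_coord set_coord_id.
Qed.

Lemma card_fiber_sum (A : {set Sp p}) : #|A| = \sum_c #|fiber A c|.
Proof.
rewrite -sum1_card (partition_big (fun x : Sp p => x i) predT) //=.
by apply: eq_bigr => c _; rewrite -sum1_card; apply: eq_bigl => x; rewrite !inE.
Qed.

Lemma card_fiberC (A : {set Sp p}) c :
  #|A| = #|fiber A c| + #|[set x in A | x i != c]|.
Proof.
rewrite -(cardsID (fiber A c) A); congr (_ + _); apply: eq_card => x;
  by rewrite !inE; case: (x \in A); case: (x i == c).
Qed.

Lemma cross_int_cylinder r (A B : {set Sp p}) l m :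
  cross_int r A B -> l != m -> cross_int r (cylinder A l) (cylinder B m).
Proof.
move=> crossAB neq_lm x y; rewrite !inE => xA yB.
exact: leq_trans (crossAB _ _ xA yB) (agree_set_coord _ _ neq_lm).
Qed.

End CoordinateUpdate.

Lemma sum_ord_le q (f : 'I_q -> nat) M : (forall l, f l <= M) -> \sum_l f l <= q * M.
Proof.
by move=> le_fM; rewrite -[q in q * _]card_ord -sum_nat_const; apply: leq_sum.
Qed.

Lemma sum_ord_neq_le q (f : 'I_q -> nat) l0 K C :
  (forall m, m != l0 -> K * f m <= C) -> K * (\sum_m f m - f l0) <= q.-1 * C.
Proof.
move=> le_fC; rewrite (bigD1 l0) //= addKn big_distrr /=.
apply: (@leq_trans (\sum_(m | m != l0) C)); first exact: leq_sum.
by rewrite sum_nat_const cardC1 card_ord.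
Qed.

Lemma sum_ord_eq_max q (f : 'I_q -> nat) M :
  (forall l, f l <= M) -> \sum_l f l = q * M -> forall l, f l = M.
Proof.
move=> le_fM sum_f l; apply/eqP; rewrite eqn_leq le_fM leqNgt; apply/negP=> lt_fM.
suff : \sum_m f m < q * M by rewrite sum_f ltnn.
have q_gt0 : 0 < q := leq_ltn_trans (leq0n l) (ltn_ord l).
rewrite (bigD1 l) //= -[q in q * M](prednK q_gt0) mulSn -addSn.
apply: leq_add lt_fM _.
by rewrite -[q in q.-1]card_ord -(cardC1 l) -sum_nat_const; apply: leq_sum.
Qed.

Section FiberSizes.
Variables (q : nat) (a b : 'I_q -> nat) (s t : nat).
Hypotheses (q_gt1 : 1 < q) (s_gt0 : 0 < s) (t_gt0 : 0 < t).
Hypotheses (sum_a : s = \sum_l a l) (sum_b : t = \sum_l b l).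
Hypothesis fiber_product : forall l m, l != m -> q * q * a l * b m <= s * t.

Lemma le_fiber_sum_a l : a l <= s.
Proof. by rewrite sum_a (bigD1 l) //= leq_addr. Qed.

Lemma le_fiber_sum_b l : b l <= t.
Proof. by rewrite sum_b (bigD1 l) //= leq_addr. Qed.

Lemma heavy_fiber_transfer l0 : q * s <= q * a l0 + s -> q * t <= q * b l0 + t.
Proof.
move=> heavy_a.
have small_b m : m != l0 -> (q * q.-1) * b m <= t.
  rewrite eq_sym => neq_m; rewrite -(leq_pmul2l s_gt0).
  apply: leq_trans (fiber_product neq_m).
  have -> : q.-1 = q - 1 by rewrite subn1.
  by rewrite mulnBr muln1; nia.
have := sum_ord_neq_le small_b; rewrite -sum_b [q * _]mulnC -mulnA leq_pmul2l; last first.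
  by rewrite -ltnS prednK // ltnW.
by have := le_fiber_sum_b l0; nia.
Qed.

Lemma max_fiber_heavy_or_uniform l0 :
  (forall l, a l <= a l0) -> q * s <= q * a l0 + s \/ q * a l0 = s.
Proof.
move=> max_l0; have [heavy|light] := leqP (q * s) (q * a l0 + s); first by left.
right; apply/eqP; rewrite eqn_leq [in s <= _]sum_a sum_ord_le // andbT leqNgt.
apply/negP=> above_mean.
have bound_b : q * q * a l0 * (t - b l0) <= q.-1 * (s * t).
  rewrite [in t - _]sum_b; apply: sum_ord_neq_le => m neq_m.
  by apply: fiber_product; rewrite eq_sym.
have bound_a : q * q * b l0 * (s - a l0) <= q.-1 * (s * t).
  rewrite [in s - _]sum_a; apply: sum_ord_neq_le => m neq_m.
  by rewrite mulnAC; apply: fiber_product.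
(* Weighting the two bounds by s - a l0 and a l0 and adding gives
   q^2 a (s - a) <= (q-1) s^2, i.e. (q a - s) ((q-1) s - q a) <= 0. *)
have [S eq_s] : exists S, s = a l0 + S.
  by exists (s - a l0); rewrite subnKC ?le_fiber_sum_a.
have [T eq_t] : exists T, t = b l0 + T.
  by exists (t - b l0); rewrite subnKC ?le_fiber_sum_b.
have [Q eq_q] : exists Q, q = Q.+1 by exists q.-1; rewrite prednK // ltnW.
have sum_gt0 : 0 < b l0 + T by rewrite -eq_t.
move: bound_a bound_b above_mean light sum_gt0; rewrite eq_s eq_t eq_q !addKn /=.
move: (a l0) (b l0) => x y bound_a bound_b above_mean light sum_gt0.
have : (x * S) * (Q.+1 * Q.+1) * (y + T) <= (Q * (x + S) * (x + S)) * (y + T).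
  by have := leq_add (leq_mul bound_b (leqnn S)) (leq_mul bound_a (leqnn x)); nia.
rewrite leq_pmul2r //.
have : 0 < (Q * x - S) * (Q * S - x) by rewrite muln_gt0; apply/andP; split; lia.
nia.
Qed.

End FiberSizes.

Lemma heavy_fiber_or_uniform q (a b : 'I_q -> nat) s t :
  1 < q -> 0 < s -> 0 < t -> s = \sum_l a l -> t = \sum_l b l ->
  (forall l m, l != m -> q * q * a l * b m <= s * t) ->
  (exists l, q * s <= q * a l + s /\ q * t <= q * b l + t) \/
  [/\ 2 < q, forall l, q * a l = s & forall l, q * b l = t].
Proof.
move=> q_gt1 s_gt0 t_gt0 sum_a sum_b prod_ab.
have prod_ba l m : l != m -> q * q * b l * a m <= t * s.
  by move=> neq_lm; rewrite mulnAC [t * s]mulnC prod_ab // eq_sym.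
have transfer_ab := heavy_fiber_transfer q_gt1 s_gt0 t_gt0 sum_a sum_b prod_ab.
have transfer_ba := heavy_fiber_transfer q_gt1 t_gt0 s_gt0 sum_b sum_a prod_ba.
have l0 : 'I_q := Ordinal (ltnW q_gt1).
have [la _ max_a] := @arg_maxnP _ l0 predT a isT.
have [lb _ max_b] := @arg_maxnP _ l0 predT b isT.
have [heavy_a|unif_a] := max_fiber_heavy_or_uniform q_gt1 s_gt0 t_gt0 sum_a sum_b
  prod_ab (fun l => max_a l isT).
  by left; exists la; split; last exact: transfer_ab.
have [heavy_b|unif_b] := max_fiber_heavy_or_uniform q_gt1 t_gt0 s_gt0 sum_b sum_a
  prod_ba (fun l => max_b l isT).
  by left; exists lb; split; first exact: transfer_ba.
have [le_q2|gt_q2] := leqP q 2.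
  have heavy_a : q * s <= q * a la + s by rewrite unif_a; nia.
  by left; exists la; split; last exact: transfer_ab.
right; split=> //.
- have sum_a_max : \sum_l a l = q * a la by rewrite -sum_a unif_a.
  by move=> l; rewrite (sum_ord_eq_max (fun l => max_a l isT) sum_a_max).
- have sum_b_max : \sum_l b l = q * b lb by rewrite -sum_b unif_b.
  by move=> l; rewrite (sum_ord_eq_max (fun l => max_b l isT) sum_b_max).
Qed.

Lemma exists_ord_neq2 q (l m : 'I_q) : 2 < q -> exists k : 'I_q, (k != l) && (k != m).
Proof.
move=> q_gt2; have : 0 < #|~: [set l; m]|.
  by have := cardsC [set l; m]; rewrite card_ord cards2; case: (l != m) => /=; lia.
by case/card_gt0P=> k; rewrite !inE negb_or; exists k.
Qed.

Section MaximalPairs.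
Variables (n r : nat) (p : 'I_n -> nat).

Lemma agreeC (x y : Sp p) : agree x y = agree y x.
Proof. by apply: eq_card => j; rewrite !inE eq_sym. Qed.

Lemma cross_int_sym (A B : {set Sp p}) : cross_int r A B -> cross_int r B A.
Proof. by move=> crossAB y x yB xA; rewrite /r_intersecting agreeC; apply: crossAB. Qed.

Lemma maximal_pair_sym (A B : {set Sp p}) : maximal_pair r A B -> maximal_pair r B A.
Proof.
case=> crossAB maxAB; split; first exact: cross_int_sym.
by move=> A' B' /cross_int_sym/maxAB; rewrite mulnC [#|B| * _]mulnC.
Qed.

Lemma maximal_pair_card_gt0 (A B : {set Sp p}) :
  r <= n -> (forall j, 0 < p j) -> maximal_pair r A B -> 0 < #|A| /\ 0 < #|B|.
Proof.
move=> le_rn p_gt0 [_ maxAB]; pose x0 : Sp p := [ffun j => Ordinal (p_gt0 j)].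
have cross_x0 : cross_int r [set x0] [set x0].
  move=> x y; rewrite !inE => /eqP -> /eqP ->; rewrite /r_intersecting /agree.
  suff -> : [set j | x0 j == x0 j] = setT by rewrite cardsT card_ord.
  by apply/setP=> j; rewrite !inE eqxx.
by have := maxAB _ _ cross_x0; rewrite cards1 muln_gt0 => /andP.
Qed.

Lemma maximal_pair_fiber_product (A B : {set Sp p}) i (l m : 'I_(p i)) :
  maximal_pair r A B -> l != m ->
  p i * p i * #|fiber A l| * #|fiber B m| <= #|A| * #|B|.
Proof.
case=> crossAB maxAB neq_lm; have := maxAB _ _ (cross_int_cylinder crossAB neq_lm).
by rewrite !card_cylinder mulnCA !mulnA.
Qed.

(* For x in A and y not in A differing only at i, the cylinder of A at x_i
   contains x but the one at y_i (of size |A|) does not; paired with the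
   cylinder of B at a third value, their union beats the maximal product. *)
Lemma maximal_pair_uniform_irrelevant (A B : {set Sp p}) (i : 'I_n) :
  maximal_pair r A B -> 0 < #|B| -> 2 < p i ->
  (forall l : 'I_(p i), p i * #|fiber A l| = #|A|) ->
  (forall k : 'I_(p i), p i * #|fiber B k| = #|B|) ->
  irrelevant i A.
Proof.
case=> crossAB maxAB B_gt0 pi_gt2 unif_A unif_B x y diff_xy xA.
apply/negPn/negP=> yNA.
have neq_xy : x i != y i.
  apply: contra yNA => /eqP eq_i.
  rewrite -(set_coord_id i y) -(differ_only_at_set_coord _ diff_xy) -eq_i.
  by rewrite (set_coord_id i).
have [k /andP [neq_kx neq_ky]] := exists_ord_neq2 (x i) (y i) pi_gt2.
have cross_U : cross_int r (cylinder A (x i) :|: cylinder A (y i)) (cylinder B k).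
  move=> z w; rewrite inE => /orP [] zA wB;
    by apply: cross_int_cylinder crossAB _ _ _ zA wB; rewrite eq_sym.
have x_in : x \in cylinder A (x i) by rewrite inE (set_coord_id i).
have x_out : x \notin cylinder A (y i).
  by rewrite inE (differ_only_at_set_coord _ diff_xy) (set_coord_id i).
have card_U : #|A| < #|cylinder A (x i) :|: cylinder A (y i)|.
  rewrite -(unif_A (y i)) -card_cylinder.
  apply: (@leq_trans #|x |: cylinder A (y i)|); first by rewrite cardsU1 x_out.
  by apply/subset_leq_card; rewrite subUset sub1set inE x_in subsetUr.
have := maxAB _ _ cross_U; rewrite card_cylinder unif_B leqNgt ltn_pmul2r //.
by rewrite card_U.
Qed.

End MaximalPairs.

Theorem lemma9 (n r : nat) (p : 'I_n -> nat)
  (hr1 : 1 <= r) (hrn : r <= n) (hp : forall i, 2 <= p i)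
  (A B : {set Sp p}) (hmax : maximal_pair r A B)
  (i : 'I_n) (hrel : relevant i A \/ relevant i B) :
  exists l : 'I_(p i),
    #|[set x in A | x i != l]| * p i <= #|A| /\
    #|[set y in B | y i != l]| * p i <= #|B|.
Proof.
have p_gt0 j : 0 < p j by apply: leq_trans (hp j).
have [A_gt0 B_gt0] := maximal_pair_card_gt0 hrn p_gt0 hmax.
have [[l [heavy_A heavy_B]]|[pi_gt2 unif_A unif_B]] :=
  heavy_fiber_or_uniform (hp i) A_gt0 B_gt0 (card_fiber_sum i A) (card_fiber_sum i B)
    (fun l m => maximal_pair_fiber_product hmax (l:=l) (m:=m)).
  by exists l; rewrite (card_fiberC A l) (card_fiberC B l) in heavy_A heavy_B *; nia.
case: hrel => [[]|[]].
  exact: maximal_pair_uniform_irrelevant hmax B_gt0 pi_gt2 unif_A unif_B.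
exact: maximal_pair_uniform_irrelevant (maximal_pair_sym hmax) A_gt0 pi_gt2 unif_B unif_A.
Qed.
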